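(* Let $m\ge1$ be an integer, let $G_0$ be a regular conditional distribution of $X_0$ given $\{X_i:0<|i|\le m\}$ (also written as a distribution function $G_0(y)$), and suppose there exist a set $A\in\mathcal F$ with $P(A)>0$ and real numbers $\varepsilon\in(0,1/2)$, $a\le\xi_p\le b$ such that for all $\omega\in A$, $G_0((a-\varepsilon,a])>\varepsilon$ and $G_0((b,b+\varepsilon])>\varepsilon$. Then $P(G_0(\xi_p)=1)<p$.
   Context: $\{X_i\}_{i\in\mathbb{Z}}$ is a strictly stationary real sequence on $(\Omega,\mathcal F,P)$ with marginal distribution function $F$; $p\in(0,1)$, $\xi_p=\inf\{x:F(x)\ge p\}$, and $F(\xi_p)=p$ (e.g. $F$ continuous at $\xi_p$). *)

From HB Require Import structures.
From mathcomp Require Import all_boot all_order all_algebra.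
From mathcomp Require Import all_classical all_reals all_analysis.
From mathcomp Require Import measurable_realfun.
Set Implicit Arguments. Unset Strict Implicit. Unset Printing Implicit Defensive.
Import Order.TTheory GRing.Theory Num.Theory.
Local Open Scope classical_set_scope.
Local Open Scope ring_scope.

(* Strict stationarity of a real sequence (X_i)_{i in Z}: all finite-dimensional
   distributions are shift invariant (stated on measurable rectangles, which
   determine the finite-dimensional laws). *)
Definition strictly_stationary d (Omega : measurableType d) (R : realType)
  (P : probability Omega R) (X : int -> Omega -> R) : Prop :=
  forall (n : nat) (t : 'I_n -> int) (B : 'I_n -> set R) (k : int),
    (forall j, measurable (B j)) ->
    P (\bigcap_(j in [set: 'I_n]) (X (t j) @^-1` B j)) =
    P (\bigcap_(j in [set: 'I_n]) (X (t j + k) @^-1` B j)).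

Definition marginal_cdf d (Omega : measurableType d) (R : realType)
  (P : probability Omega R) (X : int -> Omega -> R) (x : R) : R :=
  fine (P (X 0 @^-1` `]-oo, x])).

Definition quantile (R : realType) (F : R -> R) (p : R) : R :=
  inf [set x | p <= F x].

Definition neigh_gen d (Omega : measurableType d) (R : realType)
  (X : int -> Omega -> R) (m : nat) : set (set Omega) :=
  [set E | exists i : int, exists B : set R,
     [/\ (0 < `|i| <= m%:Z)%R, measurable B & E = X i @^-1` B]].

Definition sub_measurable d (Omega : measurableType d) (R : realType)
  (G : set (set Omega)) (f : Omega -> \bar R) : Prop :=
  forall Y : set (\bar R), measurable Y -> <<s G >> (f @^-1` Y).

Definition is_rcd d (Omega : measurableType d) (R : realType)
  (P : probability Omega R) (X : int -> Omega -> R) (m : nat)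
  (G0 : Omega -> probability R R) : Prop :=
  (forall B : set R, measurable B ->
     sub_measurable (neigh_gen X m) (fun w => G0 w B)) /\
  (forall (B : set R) (E : set Omega), measurable B -> <<s neigh_gen X m >> E ->
     P (E `&` X 0 @^-1` B) = (\int[P]_(w in E) G0 w B)%E).

From HB Require Import structures.
From mathcomp Require Import all_boot all_order all_algebra.
From mathcomp Require Import all_classical all_reals all_analysis.
From mathcomp Require Import measurable_realfun.
Import Order.TTheory GRing.Theory Num.Theory.
Local Open Scope classical_set_scope.
Local Open Scope ring_scope.

(* Let S be the event {G0(xi_p) = 1}.  It is sigma(X_i : 0<|i|<=m)-measurable,
   so the defining property of G0 gives P(S & {X_0 <= xi_p}) = P(S).  On A the
   mass eps > 0 that G0 puts on ]b, b + eps] keeps G0(xi_p) below 1, so A lies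
   in the complement of S, and the mass eps that G0 puts on ]a - eps, a] gives
   P(~S & {X_0 <= xi_p}) >= eps P(A) > 0.  Hence
   p = F(xi_p) = P(S) + P(~S & {X_0 <= xi_p}) > P(S). *)

Section probability_on_reals.
Local Set Implicit Arguments.
Local Unset Strict Implicit.
Variables (R : realType) (mu : probability R R).

Lemma probability_lt1_of_disjoint (B C : set R) :
  measurable B -> measurable C -> B `&` C = set0 -> (0 < mu C)%E ->
  (mu B < 1)%E.
Proof.
move=> mB mC BC0 muC.
have muBC : (mu B + mu C <= 1)%E.
  by rewrite -measureU //; exact: probability_le1 (measurableU _ _ mB mC).
by apply: lt_le_trans muBC; rewrite lteDl // fin_num_measure.
Qed.

Lemma probability_Iic_lt1 (x b c : R) :
  x <= b -> (0 < mu `]b, c]%classic)%E -> (mu `]-oo, x]%classic < 1)%E.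
Proof.
move=> xb; apply: probability_lt1_of_disjoint => //.
apply/seteqP; split=> // y [/=]; rewrite !in_itv /= => yx /andP[b_y _].
by move: (lt_le_trans b_y (le_trans yx xb)); rewrite ltxx.
Qed.

End probability_on_reals.

Section regular_conditional_distribution.
Local Set Implicit Arguments.
Local Unset Strict Implicit.
Variables (d : measure_display) (Omega : measurableType d) (R : realType).
Variables (P : probability Omega R) (X : int -> Omega -> R) (m : nat).
Variable G0 : Omega -> probability R R.
Hypothesis measurable_X : forall i, measurable_fun setT (X i).
Hypothesis rcd_G0 : is_rcd P X m G0.

Lemma neigh_sigma_sub_measurable : <<s neigh_gen X m >> `<=` measurable.
Proof.
apply: smallest_sub; first exact: sigma_algebra_measurable.
move=> _ [i [C [_ mC ->]]].
by have := measurable_X i measurableT mC; rewrite setTI.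
Qed.

Lemma rcd_measurable_fun (B : set R) : measurable B ->
  measurable_fun setT (fun w => G0 w B).
Proof.
move=> mB _ Y mY; rewrite setTI.
by apply: neigh_sigma_sub_measurable; exact: rcd_G0.1.
Qed.

Lemma rcd_joint_eq_measure (B : set R) (E : set Omega) :
  measurable B -> <<s neigh_gen X m >> E -> (forall w, E w -> G0 w B = 1%E) ->
  P (E `&` X 0 @^-1` B) = P E.
Proof.
move=> mB sE G1; rewrite rcd_G0.2 //.
rewrite (eq_integral (cst 1%E)); last by move=> w /[!inE] /G1.
by rewrite integral_cst ?mul1e //; exact: neigh_sigma_sub_measurable.
Qed.

Lemma rcd_joint_ge (B : set R) (E A : set Omega) (c : R) :
  measurable B -> <<s neigh_gen X m >> E -> measurable A -> A `<=` E ->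
  0 <= c -> (forall w, A w -> c%:E <= G0 w B)%E ->
  (c%:E * P A <= P (E `&` X 0%R @^-1` B))%E.
Proof.
move=> mB sE mA AE c0 cG; rewrite rcd_G0.2 // -integral_cst //.
have mE := neigh_sigma_sub_measurable sE.
have mGE := measurable_funS measurableT (subsetT E) (rcd_measurable_fun mB).
apply: le_trans (ge0_subset_integral _ mA mE mGE _ AE) => //.
by apply: ge0_le_integral => //; exact: measurable_funS mGE.
Qed.

Lemma rcd_measure_lt (B : set R) (E : set Omega) :
  measurable B -> <<s neigh_gen X m >> E -> (forall w, E w -> G0 w B = 1%E) ->
  (0 < P (~` E `&` X 0%R @^-1` B))%E -> (P E < P (X 0%R @^-1` B))%E.
Proof.
move=> mB sE G1 EcY_pos.
have mE := neigh_sigma_sub_measurable sE.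
have mY : measurable (X 0 @^-1` B).
  by have := measurable_X 0 measurableT mB; rewrite setTI.
have -> : P (X 0 @^-1` B) =
    (P (~` E `&` X 0%R @^-1` B) + P (E `&` X 0%R @^-1` B))%E.
  by rewrite (measureDI P mY mE) setDE !(setIC (X 0 @^-1` B)).
rewrite (rcd_joint_eq_measure mB sE G1) addeC lteDl //.
exact: fin_num_measure.
Qed.

End regular_conditional_distribution.

Theorem mainTheorem5 (d : measure_display) (Omega : measurableType d)
  (R : realType) (P : probability Omega R) (X : int -> Omega -> R)
  (p : R) (m : nat) (G0 : Omega -> probability R R)
  (A : set Omega) (eps a b : R) :
  (forall i, measurable_fun setT (X i)) ->
  strictly_stationary P X ->
  0 < p < 1 ->
  marginal_cdf P X (quantile (marginal_cdf P X) p) = p ->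
  (1 <= m)%N ->
  is_rcd P X m G0 ->
  measurable A -> (0 < P A)%E ->
  0 < eps < 1 / 2 ->
  a <= quantile (marginal_cdf P X) p <= b ->
  (forall w, A w ->
     (eps%:E < G0 w `](a - eps)%R, a]%classic)%E /\ (eps%:E < G0 w `]b, (b + eps)%R]%classic)%E) ->
  (P [set w | G0 w `]-oo, quantile (marginal_cdf P X) p]%classic = 1%E] < p%:E)%E.
Proof.
move=> hX _ _ F_xi _ rcd mA PA0 /andP[eps0 _] /andP[a_xi xi_b] hA.
set xi := quantile (marginal_cdf P X) p.
set B := `]-oo, xi]%classic; have mB : measurable B by exact: measurable_itv.
set S := [set w | G0 w B = 1%E].
have sS : <<s neigh_gen X m >> S := rcd.1 B mB _ (emeasurable_set1 _).
have sSc : <<s neigh_gen X m >> (~` S) :=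
  rcd.1 B mB _ (measurableC (emeasurable_set1 _)).
have A_Sc : A `<=` ~` S.
  move=> w /hA[_ hb] Sw.
  suff : (G0 w B < 1)%E by rewrite Sw ltxx.
  by apply: (probability_Iic_lt1 xi_b); apply: lt_trans hb; rewrite lte_fin.
have Sc_pos : (0 < P (~` S `&` X 0%R @^-1` B))%E.
  apply: (lt_le_trans _ (rcd_joint_ge (c := eps) hX rcd mB sSc mA A_Sc _ _)).
  - by rewrite mule_gt0 // lte_fin.
  - exact: ltW.
  move=> w /hA[ha _]; apply/ltW/(lt_le_trans ha)/le_measure; rewrite ?inE //.
  by move=> x /=; rewrite !in_itv /= => /andP[_ /le_trans]; apply.
rewrite -F_xi /marginal_cdf fineK; first exact: (rcd_measure_lt hX rcd mB sS).
apply: fin_num_measure; rewrite -[X _ @^-1` _]setTI; exact: hX.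
Qed.
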